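(* For every positive integer $n$, the number of edges of $OD(\mathbb{Z}_n)$ is $$|E(OD(\mathbb{Z}_n))|=\frac12\sum_{m\mid n}\Big(m+\sum_{\lambda\mid\frac{n}{m}}\phi(\lambda m)-2\phi(m)\Big)\phi(m),$$ where $\phi$ is Euler's totient function and sums run over positive divisors.
   Context: $\mathbb{Z}_n$ is the additive cyclic group of integers modulo $n$. For a finite group $G$, $o(x)$ denotes the order of $x\in G$. The order-divisor graph $OD(G)$ is the simple undirected graph with vertex set $G$, in which two distinct vertices $x,y$ are adjacent if and only if $o(x)\neq o(y)$ and either $o(x)\mid o(y)$ or $o(y)\mid o(x)$. *)

From mathcomp Require Import all_boot all_order all_algebra all_fingroup.
Set Implicit Arguments. Unset Strict Implicit. Unset Printing Implicit Defensive.

(* Z_n for n = k.+1 is the additive cyclic group 'I_k.+1 (zmodp's canonical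
   finGroupType on 'I_k.+1 is addition mod k.+1); #[x] is the element order. *)

Definition od_adj (gT : finGroupType) (x y : gT) : bool :=
  [&& x != y, #[x]%g != #[y]%g & (#[x]%g %| #[y]%g) || (#[y]%g %| #[x]%g)].

Definition od_edges (gT : finGroupType) : {set {set gT}} :=
  [set e : {set gT} | [exists x : gT, exists y : gT,
      (e == [set x; y]) && od_adj x y]].

(* Adjacency in OD(G) depends only on the orders of the two vertices, and a
   cyclic group of order n has exactly phi(d) elements of order d for each
   divisor d of n.  Counting ordered adjacent pairs, twice the number of edges
   is the sum over m | n of phi(m) times the number of elements whose order is
   a proper divisor or a proper multiple of m.  Since sum_(d | m) phi(d) = m and
   the multiples of m dividing n are the l m with l | n/m, that number is
   m + sum_(l | n/m) phi(l m) - 2 phi(m). *)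

From mathcomp Require Import all_boot all_order all_algebra all_fingroup all_solvable.

Set Implicit Arguments.
Unset Strict Implicit.
Unset Printing Implicit Defensive.

Lemma divisors_iota n : 0 < n -> divisors n = [seq d <- iota 0 n.+1 | d %| n].
Proof.
move=> n_gt0; apply: (irr_sorted_eq (leT := ltn)).
- exact: ltn_trans.
- exact: ltnn.
- exact: sorted_divisors_ltn.
- exact/sorted_filter/iota_ltn_sorted/ltn_trans.
move=> d; rewrite mem_filter -dvdn_divisors // mem_iota add0n ltnS.
by case dv_dn: (d %| n); rewrite //= dvdn_leq.
Qed.

Lemma sum_totient_divisors n : 0 < n -> \sum_(d <- divisors n) totient d = n.
Proof.
move=> n_gt0; rewrite divisors_iota // big_filter.
rewrite -[RHS]sum_totient_dvd -(big_mkord (fun d => d %| n)).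
reflexivity.
Qed.

Section DivisorSums.

Variables (R : Type) (idx : R) (op : Monoid.com_law idx).
Variables (n m : nat) (F : nat -> R).
Hypotheses (n_gt0 : 0 < n) (m_dvd_n : m %| n).

Let m_gt0 : 0 < m. Proof. exact: dvdn_gt0 m_dvd_n. Qed.

Lemma big_divisors_dvdn :
  \big[op/idx]_(d <- divisors n | d %| m) F d = \big[op/idx]_(d <- divisors m) F d.
Proof.
rewrite -big_filter; apply/perm_big/uniq_perm; rewrite ?filter_uniq ?divisors_uniq //.
move=> d; rewrite mem_filter -!dvdn_divisors //.
by case dv_dm: (d %| m); rewrite //= (dvdn_trans dv_dm).
Qed.

Lemma big_divisors_multiple :
  \big[op/idx]_(d <- divisors n | m %| d) F d =
  \big[op/idx]_(l <- divisors (n %/ m)) F (l * m).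
Proof.
have nm_gt0 : 0 < n %/ m by rewrite divn_gt0 // dvdn_leq.
rewrite -big_filter -(big_map (fun l => l * m) xpredT).
apply/perm_big/uniq_perm; rewrite ?filter_uniq ?divisors_uniq //.
  by rewrite map_inj_uniq ?divisors_uniq // => a b /eqP; rewrite eqn_pmul2r // => /eqP.
move=> d; rewrite mem_filter -dvdn_divisors //; apply/andP/mapP.
  case=> /dvdnP[l ->] lm_dvd_n; exists l => //.
  by rewrite -dvdn_divisors // dvdn_divRL.
case=> l; rewrite -dvdn_divisors // => l_dvd -> ; split; first exact: dvdn_mull.
by rewrite -(divnK m_dvd_n) dvdn_pmul2r.
Qed.

End DivisorSums.

Section CyclicOrders.

Variables (gT : finGroupType) (G : {group gT}).
Hypothesis cycG : cyclic G.

Lemma card_order_cyclic d : d %| #|G| -> #|[set x in G | #[x]%g == d]| = totient d.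
Proof.
move=> d_dvd_G; have d_gt0 : 0 < d by apply: dvdn_gt0 d_dvd_G.
have [a defG] := cyclicP cycG.
have oa : #[a]%g = #|G| by rewrite defG.
set b := (a ^+ (#|G| %/ d))%g.
have Gd_gt0 : 0 < #|G| %/ d by rewrite divn_gt0 // dvdn_leq ?cardG_gt0.
have ob : #[b]%g = d.
  rewrite orderXdiv oa; last exact: dvdn_div.
  by rewrite -{1}(divnK d_dvd_G) mulKn.
have Gb : b \in G by rewrite defG groupX ?cycle_id.
rewrite -ob totient_gen; apply: eq_card => x; rewrite !inE.
apply/andP/idP => [[Gx /eqP oxb] | gen_x].
  by rewrite /generator eq_sym (eq_subG_cyclic cycG) ?cycle_subG //; apply/eqP.
split; last by rewrite (generator_order gen_x).
by rewrite -cycle_subG -(eqP gen_x) cycle_subG.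
Qed.

Lemma sum_cyclic_by_order (F : nat -> nat) :
  \sum_(x in G) F #[x]%g = \sum_(d <- divisors #|G|) totient d * F d.
Proof.
transitivity (\sum_(x in G) \sum_(d <- divisors #|G|) (#[x]%g == d) * F d).
  apply: eq_bigr => x Gx; rewrite (bigD1_seq #[x]%g) ?divisors_uniq //=; last first.
    by rewrite -dvdn_divisors ?order_dvdG.
  by rewrite eqxx mul1n big1 ?addn0 // => d /negPf; rewrite eq_sym => ->.
rewrite exchange_big /= !big_seq; apply: eq_bigr => d.
rewrite -dvdn_divisors // => d_dvd_G.
rewrite -big_distrl -card_order_cyclic //; congr (_ * _).
rewrite -sum1_card (eq_bigl (fun x => (x \in G) && (#[x]%g == d))) => [|x]; last by rewrite inE.
by rewrite big_mkcondr; apply: eq_bigr => x _; case: eqP.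
Qed.

End CyclicOrders.

Lemma eq_set2 (T : finType) (a b x y : T) : a != b ->
  ([set a; b] == [set x; y]) = ((a, b) == (x, y)) || ((a, b) == (y, x)).
Proof.
move=> neq_ab; apply/idP/idP => [/eqP eq_ab_xy | /orP[] /eqP[-> ->] //]; last first.
  by rewrite setUC.
have := set21 a b; have := set22 a b; rewrite eq_ab_xy !inE.
case/orP=> /eqP eq_bx /orP[] /eqP eq_ay; subst; rewrite ?eqxx ?orbT //.
all: by rewrite eqxx in neq_ab.
Qed.

Section EdgeCount.

Variables (T : finType) (r : rel T).
Hypotheses (r_sym : symmetric r) (r_irr : irreflexive r).

Lemma card_edges_double :
  2 * #|[set e : {set T} | [exists x, exists y, (e == [set x; y]) && r x y]]| =
  \sum_x \sum_y r x y.
Proof.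
set E := [set e : {set T} | _].
rewrite pair_big /= -big_mkcond /=.
rewrite (partition_big (fun p : T * T => [set p.1; p.2]) (mem E)) => [|[x y] /= rxy]; last first.
  by rewrite inE; apply/existsP; exists x; apply/existsP; exists y; rewrite eqxx.
rewrite -sum1_card big_distrr /=; apply: eq_bigr => e.
rewrite inE => /existsP[x /existsP[y /andP[/eqP-> rxy]]].
have neq_xy : x != y by apply: contraTneq rxy => ->; rewrite r_irr.
have neq_pairs : (x, y) != (y, x) by apply: contraNneq neq_xy => -[->].
(* The edge {x, y} has exactly the two preimages (x, y) and (y, x). *)
rewrite muln1 sum1dep_card -[2]/(true.+1) -neq_pairs -cards2.
apply: eq_card => [[a b]]; rewrite !inE /=.
have [rab | nrab] := boolP (r a b); rewrite /=.
  by rewrite eq_set2 //; apply: contraTneq rab => ->; rewrite r_irr.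
by apply/negbTE; apply: contra nrab => /orP[] /eqP[-> ->]; rewrite // r_sym.
Qed.

End EdgeCount.

Definition dvdn_adj (m d : nat) : bool := (m != d) && ((m %| d) || (d %| m)).

Lemma od_adjE (gT : finGroupType) (x y : gT) : od_adj x y = dvdn_adj #[x]%g #[y]%g.
Proof. by rewrite /od_adj /dvdn_adj; have [->|] := eqVneq x y; rewrite ?eqxx. Qed.

Lemma od_adj_sym (gT : finGroupType) : symmetric (@od_adj gT).
Proof. by move=> x y; rewrite !od_adjE /dvdn_adj eq_sym orbC. Qed.

Lemma od_adj_irr (gT : finGroupType) : irreflexive (@od_adj gT).
Proof. by move=> x; rewrite od_adjE /dvdn_adj eqxx. Qed.

Lemma sum_totient_dvdn_adj n m : 0 < n -> m %| n ->
  \sum_(d <- divisors n) totient d * dvdn_adj m d + 2 * totient m =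
  m + \sum_(l <- divisors (n %/ m)) totient (l * m).
Proof.
move=> n_gt0 m_dvd_n; have m_gt0 : 0 < m by apply: dvdn_gt0 m_dvd_n.
have twice_m : 2 * totient m = \sum_(d <- divisors n) (d == m) * (2 * totient d).
  rewrite (bigD1_seq m) ?divisors_uniq -?dvdn_divisors // eqxx mul1n big1 => [|d /negPf-> //].
  by rewrite [RHS]addn0.
rewrite -(big_divisors_multiple addn totient n_gt0 m_dvd_n).
rewrite -[X in _ = X + _](sum_totient_divisors m_gt0).
rewrite -(big_divisors_dvdn addn totient n_gt0 m_dvd_n) twice_m -big_split /=.
rewrite !(big_mkcond (fun d => _ %| _)) -big_split /=; apply: eq_bigr => d _.
(* Termwise: [m adj d] + 2 [d = m] = [d | m] + [m | d]. *)
rewrite /dvdn_adj; have [->|neq_dm] := eqVneq d m.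
  by rewrite dvdnn /= muln0 mul1n mul2n addnn.
rewrite /= mul0n addn0.
case dvd_dm: (d %| m); case dvd_md: (m %| d); rewrite /= ?muln0 ?muln1 ?addn0 //.
by move: neq_dm; rewrite eqn_dvd dvd_dm dvd_md.
Qed.

Lemma card_od_edges_cyclic (gT : finGroupType) : cyclic [set: gT] ->
  2 * #|od_edges gT| =
  \sum_(m <- divisors #|gT|)
     (m + \sum_(l <- divisors (#|gT| %/ m)) totient (l * m) - 2 * totient m) * totient m.
Proof.
move=> cycT; have cardT_gt0 : 0 < #|gT| by rewrite -cardsT cardG_gt0.
have sum_by_order (F : nat -> nat) :
    \sum_(x : gT) F #[x]%g = \sum_(d <- divisors #|gT|) totient d * F d.
  by rewrite -cardsT -(sum_cyclic_by_order cycT); apply: eq_bigl => x; rewrite inE.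
rewrite (card_edges_double (@od_adj_sym gT) (@od_adj_irr gT)).
under eq_bigr => x _ do
  (under eq_bigr => y _ do rewrite od_adjE; rewrite (sum_by_order (dvdn_adj #[x]%g))).
rewrite (sum_by_order (fun m => \sum_(d <- divisors #|gT|) totient d * dvdn_adj m d)).
apply: eq_big_seq => m; rewrite -dvdn_divisors // => m_dvd_n.
by rewrite mulnC -sum_totient_dvdn_adj // addnK.
Qed.

Import GRing.Theory.
Local Open Scope ring_scope.

Theorem mainTheorem15 (k : nat) :
  let n := k.+1 in
  (#|od_edges 'I_n|)%:R =
    2^-1 * \sum_(m <- divisors n)
       ((m%:R + \sum_(l <- divisors (n %/ m)) (totient (l * m))%:R
         - 2 * (totient m)%:R) * (totient m)%:R) :> rat.
Proof.
move=> n; have cyc_Zn : cyclic [set: 'I_n] by rewrite Zp_cycle cycle_cyclic.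
have := congr1 (fun e => e%:R : rat) (card_od_edges_cyclic cyc_Zn).
rewrite card_ord natrM natr_sum /= => edges2.
rewrite -[LHS]mul1r -[1 in LHS](@mulVf _ 2) // -mulrA edges2; congr (_ * _).
apply: eq_big_seq => m; rewrite -dvdn_divisors // => m_dvd_n.
have le_2phi : (2 * totient m <= m + \sum_(l <- divisors (n %/ m)) totient (l * m))%N.
  by rewrite -sum_totient_dvdn_adj // leq_addl.
by rewrite natrM natrB // natrD natrM natr_sum.
Qed.
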